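(* Let $K$ be a field of characteristic zero, $\mathfrak{g}$ a finite-dimensional Lie algebra over $K$, $\mathfrak{g}_1$ an ideal of codimension one in $\mathfrak{g}$, and $f,f'\in\mathfrak{g}^*$ with restrictions $f_1=f|_{\mathfrak{g}_1}$, $f'_1=f'|_{\mathfrak{g}_1}$. Let $\mathfrak{p}_1$ be a subalgebra of $\mathfrak{g}_1$ that is a polarization of both $f_1$ and $f'_1$ in $\mathfrak{g}_1$, and suppose $f|_{\mathfrak{p}_1}=f'|_{\mathfrak{p}_1}$. Let $\mathfrak{p}$ be a polarization of $f$ and $\mathfrak{p}'$ a polarization of $f'$ in $\mathfrak{g}$ such that $\mathfrak{p}\cap\mathfrak{g}_1=\mathfrak{p}'\cap\mathfrak{g}_1=\mathfrak{p}_1$. Then $\mathfrak{p}=\mathfrak{p}'$.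
   Context: For a Lie algebra $\mathfrak{a}$ and $\varphi\in\mathfrak{a}^*$, a polarization of $\varphi$ in $\mathfrak{a}$ is a Lie subalgebra $\mathfrak{p}\subseteq\mathfrak{a}$ with $\varphi([\mathfrak{p},\mathfrak{p}])=0$ and $\dim\mathfrak{p}=\frac12(\dim\mathfrak{a}+\dim\mathfrak{a}^{\varphi})$, where $\mathfrak{a}^\varphi=\{x\in\mathfrak{a}\mid \varphi([x,\mathfrak{a}])=0\}$. *)

From HB Require Import structures.
From mathcomp Require Import all_boot all_order all_algebra.
Set Implicit Arguments. Unset Strict Implicit. Unset Printing Implicit Defensive.
Import GRing.Theory.
Local Open Scope ring_scope.

Definition is_lie_bracket (K : fieldType) (V : vectType K) (br : V -> V -> V) : Prop :=
  [/\ (forall x, linear (br x)),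
      (forall y, linear (fun x => br x y)),
      (forall x, br x x = 0) &
      (forall x y z, br x (br y z) + br y (br z x) + br z (br x y) = 0)].

Definition lie_subalgebra (K : fieldType) (V : vectType K) (br : V -> V -> V)
    (U : {vspace V}) : Prop :=
  forall x y, x \in U -> y \in U -> br x y \in U.

Definition lie_ideal (K : fieldType) (V : vectType K) (br : V -> V -> V)
    (I : {vspace V}) : Prop :=
  forall x y, y \in I -> br x y \in I.

Definition is_stabilizer (K : fieldType) (V : vectType K) (br : V -> V -> V)
    (a : {vspace V}) (phi : V -> K) (S : {vspace V}) : Prop :=
  forall x, x \in S <-> (x \in a /\ forall y, y \in a -> phi (br x y) = 0).

Definition polarization (K : fieldType) (V : vectType K) (br : V -> V -> V)
    (a : {vspace V}) (phi : V -> K) (p : {vspace V}) : Prop :=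
  [/\ (p <= a)%VS,
      lie_subalgebra br p,
      (forall x y, x \in p -> y \in p -> phi (br x y) = 0) &
      exists2 S : {vspace V}, is_stabilizer br a phi S &
        (2 * \dim p = \dim a + \dim S)%N].

(* Let B(x, y) = f'([x, y]) be the Kirillov form of f' and T = p + p'.  Since
   p1 = p :&: g1 lies in both polarizations, is stable under [p, _] (g1 is an
   ideal) and f = f' on p1, the subspace T is B-orthogonal to p1.  The
   linear-algebra fact driving the proof is the bound
        dim T + dim U <= dim a + dim a^f'     for B-orthogonal T, U <= a,
   which holds because T lies in the orthogonal of U, whose dimension is
   dim a - dim U + dim (U :&: a^f').  Applied in g and in g1 together with the
   dimension formula for polarizations and codim g1 = 1, it gives
   dim T <= dim p', hence p <= p'; by symmetry p = p'. *)

From HB Require Import structures.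
From mathcomp Require Import all_boot all_order all_algebra zify.
Set Implicit Arguments. Unset Strict Implicit. Unset Printing Implicit Defensive.
Import GRing.Theory VectorInternalTheory.
Local Open Scope ring_scope.

Section GramRank.
Variables (K : fieldType) (n : nat) (G : 'M[K]_n).

Lemma rank_orthogonal_sub m mU mT (A : 'M_(m, n)) (U : 'M_(mU, n)) (T : 'M_(mT, n)) :
  row_free A -> (T <= A)%MS -> T *m G *m U^T = 0 ->
  (\rank T + \rank (A *m G *m U^T) <= \rank A)%N.
Proof.
move=> /eqnP freeA TA TGU; set M := A *m G *m U^T; set X := T *m pinvmx A.
have TX : T = X *m A by rewrite mulmxKpV.
have XM : (X <= kermx M)%MS by apply/sub_kermxP; rewrite /M !mulmxA -TX TGU.
have := mxrankS XM; rewrite mxrank_ker freeA.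
have := mxrankM_maxl X A; rewrite -TX.
have := rank_leq_row M; lia.
Qed.

Hypothesis antiG : G^T = - G.

Lemma rank_le_radical mA mU mS (A : 'M_(mA, n)) (U : 'M_(mU, n)) (S : 'M_(mS, n)) :
  row_free U -> (U <= A)%MS ->
  (forall k (x : 'M_(k, n)), (x <= A)%MS -> x *m G *m A^T = 0 -> (x <= S)%MS) ->
  (\rank U <= \rank (A *m G *m U^T) + \rank S)%N.
Proof.
move=> freeU UA radS; set M := A *m G *m U^T; set Y := kermx M^T.
have YU_rad : Y *m U *m G *m A^T = 0.
  have /sub_kermxP : (Y <= kermx M^T)%MS by [].
  rewrite /M !trmx_mul trmxK antiG !mulmxA mulmxN mulNmx.
  by move/eqP; rewrite oppr_eq0 => /eqP.
have := mxrankS (radS _ _ (submx_trans (submxMl _ _) UA) YU_rad).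
rewrite mxrankMfree // mxrank_ker mxrank_tr.
move/eqnP: freeU; have := rank_leq_row M; lia.
Qed.

Lemma rank_isotropic_bound mA mU mT mS (A : 'M_(mA, n)) (U : 'M_(mU, n))
    (T : 'M_(mT, n)) (S : 'M_(mS, n)) :
  (U <= A)%MS -> (T <= A)%MS -> T *m G *m U^T = 0 ->
  (forall k (x : 'M_(k, n)), (x <= A)%MS -> x *m G *m A^T = 0 -> (x <= S)%MS) ->
  (\rank T + \rank U <= \rank A + \rank S)%N.
Proof.
move=> UA TA TGU radS; set A' := row_base A; set U' := row_base U.
have TGU' : T *m G *m U'^T = 0.
  have /submxP[D ->] : (U' <= U)%MS by rewrite eq_row_base.
  by rewrite trmx_mul mulmxA TGU mul0mx.
have radS' k (x : 'M_(k, n)) : (x <= A')%MS -> x *m G *m A'^T = 0 -> (x <= S)%MS.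
  move=> xA xGA; apply: radS; first by rewrite -(eq_row_base A).
  have /submxP[D ->] : (A <= A')%MS by rewrite eq_row_base.
  by rewrite trmx_mul mulmxA xGA mul0mx.
have TA' : (T <= A')%MS by rewrite eq_row_base.
have UA' : (U' <= A')%MS by rewrite !eq_row_base.
have le_T := rank_orthogonal_sub (row_base_free A) TA' TGU'.
have le_U := rank_le_radical (row_base_free U) UA' radS'.
have rU : \rank U' = \rank U by rewrite eq_row_base.
have rA : \rank A' = \rank A by rewrite eq_row_base.
rewrite -rU -rA; apply: leq_trans (leq_add (leqnn _) le_U) _.
by rewrite addnA leq_add2r.
Qed.
End GramRank.

Section GramMatrix.
Variables (K : fieldType) (V : vectType K) (B : V -> V -> K).
Hypothesis B_linl : forall a x z y, B (a *: x + z) y = a * B x y + B z y.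
Hypothesis B_linr : forall a x y z, B x (a *: y + z) = a * B x y + B x z.

Lemma form0l y : B 0 y = 0.
Proof.
have := B_linl 1 0 0 y; rewrite scale1r addr0 mul1r => h.
by apply: (addrI (B 0 y)); rewrite addr0.
Qed.

Lemma form0r x : B x 0 = 0.
Proof.
have := B_linr 1 x 0 0; rewrite scale1r addr0 mul1r => h.
by apply: (addrI (B x 0)); rewrite addr0.
Qed.

Lemma form_suml m (a : 'I_m -> K) (v : 'I_m -> V) y :
  B (\sum_(i < m) a i *: v i) y = \sum_(i < m) a i * B (v i) y.
Proof.
apply: (big_rec2 (fun s t => B s y = t)); first exact: form0l.
by move=> i s t _ <-; rewrite B_linl.
Qed.

Lemma form_sumr m (a : 'I_m -> K) (v : 'I_m -> V) x :
  B x (\sum_(i < m) a i *: v i) = \sum_(i < m) a i * B x (v i).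
Proof.
apply: (big_rec2 (fun s t => B x s = t)); first exact: form0r.
by move=> i s t _ <-; rewrite B_linr.
Qed.

Definition std_vec (i : 'I_(dim V)) : V := r2v (delta_mx 0 i).
Definition gram : 'M[K]_(dim V) := \matrix_(i, j) B (std_vec i) (std_vec j).

Lemma std_vec_expansion x : x = \sum_(i < dim V) v2r x 0 i *: std_vec i.
Proof.
rewrite -{1}(v2rK x) {1}(row_sum_delta (v2r x)) linear_sum.
by apply: eq_bigr => i _; rewrite linearZ.
Qed.

Lemma form_gram x y : B x y = (v2r x *m gram *m (v2r y)^T) 0 0.
Proof.
rewrite {1}(std_vec_expansion x) {1}(std_vec_expansion y) form_suml mxE.
under eq_bigr => i _ do rewrite form_sumr mulr_sumr.
rewrite exchange_big /=; apply: eq_bigr => j _.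
rewrite !mxE mulr_suml; apply: eq_bigr => i _.
by rewrite mxE -mulrA [_ * v2r y 0 j]mulrC.
Qed.
End GramMatrix.

Lemma mem_vs2mx (K : fieldType) (V : vectType K) (v : V) (U : {vspace V}) :
  (v \in U) = (v2r v <= vs2mx U)%MS.
Proof. by rewrite -genmxE. Qed.

Lemma mulmx_tr_entry (K : fieldType) n m1 m2 (X : 'M[K]_(m1, n)) (G : 'M_n)
    (Y : 'M_(m2, n)) i j :
  (X *m G *m Y^T) i j = (row i X *m G *m (row j Y)^T) 0 0.
Proof.
rewrite !mxE; apply: eq_bigr => k _; rewrite !mxE; congr (_ * _).
by apply: eq_bigr => l _; rewrite !mxE.
Qed.

Lemma dim_isotropic_bound (K : fieldType) (V : vectType K) (B : V -> V -> K)
    (A U T S : {vspace V}) :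
  (forall a x z y, B (a *: x + z) y = a * B x y + B z y) ->
  (forall a x y z, B x (a *: y + z) = a * B x y + B x z) ->
  (forall x y, B y x = - B x y) ->
  (U <= A)%VS -> (T <= A)%VS -> (forall t u, t \in T -> u \in U -> B t u = 0) ->
  (forall x, x \in A -> (forall y, y \in A -> B x y = 0) -> x \in S) ->
  (\dim T + \dim U <= \dim A + \dim S)%N.
Proof.
move=> B_linl B_linr B_anti UA TA TU radS.
have vec_in (W : {vspace V}) k : r2v (row k (vs2mx W)) \in W.
  by rewrite mem_vs2mx r2vK row_sub.
apply: (rank_isotropic_bound (G := gram B)) UA TA _ _.
- by apply/matrixP => i j; rewrite !mxE B_anti.
- apply/matrixP => i j; rewrite mulmx_tr_entry [RHS]mxE.
  by rewrite -[row i _]r2vK -[row j _]r2vK -form_gram ?TU ?vec_in.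
move=> k x xA xGA; apply/row_subP => i.
rewrite -[row i x]r2vK -mem_vs2mx; apply: radS.
  by rewrite mem_vs2mx r2vK (submx_trans (row_sub _ _)).
move=> y; rewrite mem_vs2mx form_gram // => /submxP[w ->].
rewrite r2vK trmx_mul !mulmxA -!row_mul xGA.
by rewrite mul0mx row0 mxE.
Qed.

Section KirillovForm.
Variables (K : fieldType) (V : vectType K) (br : V -> V -> V).
Hypothesis Hlie : is_lie_bracket br.

Lemma bracketDl x y z : br (x + y) z = br x z + br y z.
Proof. by case: Hlie => _ linl _ _; have := linl z 1 x y; rewrite !scale1r. Qed.

Lemma bracketDr x y z : br x (y + z) = br x y + br x z.
Proof. by case: Hlie => linr _ _ _; have := linr x 1 y z; rewrite !scale1r. Qed.

Definition kirillov (f : {scalar V}) (x y : V) : K := f (br x y).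

Lemma kirillov_linl f a x z y :
  kirillov f (a *: x + z) y = a * kirillov f x y + kirillov f z y.
Proof. by case: Hlie => _ linl _ _; rewrite /kirillov linl linearP. Qed.

Lemma kirillov_linr f a x y z :
  kirillov f x (a *: y + z) = a * kirillov f x y + kirillov f x z.
Proof. by case: Hlie => linr _ _ _; rewrite /kirillov linr linearP. Qed.

Lemma kirillov_anti f x y : kirillov f y x = - kirillov f x y.
Proof.
case: Hlie => _ _ alt _.
have := alt (x + y); rewrite bracketDl !bracketDr !alt add0r addr0 => /eqP.
by rewrite addr_eq0 /kirillov => /eqP ->; rewrite raddfN opprK.
Qed.

Lemma dim_orthogonal_stabilizer (f : {scalar V}) (a U T S : {vspace V}) :
  (U <= a)%VS -> (T <= a)%VS ->
  (forall t u, t \in T -> u \in U -> f (br t u) = 0) ->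
  is_stabilizer br a f S -> (\dim T + \dim U <= \dim a + \dim S)%N.
Proof.
move=> Ua Ta TU stabS.
apply: (dim_isotropic_bound (kirillov_linl f) (kirillov_linr f) (kirillov_anti f))
  Ua Ta TU _.
by move=> x xa xS; apply/stabS.
Qed.

(* The sum p + p' of the two polarizations is B_f'-orthogonal to their common
   part p1 = p :&: g1: for x in p and u in p1, [x, u] lies in p :&: g1 = p1
   (g1 is an ideal), where f' agrees with f, which vanishes on [p, p]. *)
Lemma polarization_sum_orthogonal (g1 p p' p1 : {vspace V}) (f f' : {scalar V}) :
  lie_ideal br g1 -> lie_subalgebra br p ->
  (forall x y, x \in p -> y \in p -> f (br x y) = 0) ->
  (forall x y, x \in p' -> y \in p' -> f' (br x y) = 0) ->
  (p :&: g1)%VS = p1 -> (p1 <= p')%VS -> (forall x, x \in p1 -> f x = f' x) ->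
  forall t u, t \in (p + p')%VS -> u \in p1 -> f' (br t u) = 0.
Proof.
move=> g1_ideal p_sub p_iso p'_iso p_cap p1p' ff' t u /memv_addP[x xp [x' x'p ->]] up1.
have [up ug1] : u \in p /\ u \in g1 by apply/andP; rewrite -memv_cap p_cap.
have xu_p1 : br x u \in p1 by rewrite -p_cap memv_cap p_sub ?g1_ideal.
rewrite bracketDl raddfD /= (p'_iso x' u x'p (subvP p1p' _ up1)) addr0.
by rewrite -ff' ?p_iso.
Qed.

(* Put T = p + p'.  The
   orthogonality above gives, by the bound on orthogonal subspaces in g and
   in g1, dim T + dim p1 <= dim g + dim g^f' = 2 dim p' and
   dim (T :&: g1) + dim p1 <= dim g1 + dim g1^f'1 = 2 dim p1; as g1 has
   codimension one this forces dim T <= dim p', hence T = p'. *)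
Lemma polarization_sub (g1 : {vspace V}) (f f' : {scalar V}) (p1 p p' : {vspace V}) :
  lie_ideal br g1 -> (\dim g1).+1 = \dim (fullv : {vspace V}) ->
  polarization br g1 f' p1 -> (forall x, x \in p1 -> f x = f' x) ->
  polarization br fullv f p -> polarization br fullv f' p' ->
  (p :&: g1)%VS = p1 -> (p' :&: g1)%VS = p1 -> (p <= p')%VS.
Proof.
move=> g1_ideal codim [p1g1 _ _ [S1 stab1 dim_p1]] ff' [_ p_sub p_iso _]
  [_ _ p'_iso [S' stab' dim_p']] p_cap p'_cap.
have p1p' : (p1 <= p')%VS by rewrite -p'_cap capvSl.
set T := (p + p')%VS.
have orth := polarization_sum_orthogonal g1_ideal p_sub p_iso p'_iso p_cap p1p' ff'.
have le_T : (\dim T + \dim p1 <= \dim (fullv : {vspace V}) + \dim S')%N.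
  exact: dim_orthogonal_stabilizer (subvf _) (subvf _) orth stab'.
have le_Tg1 : (\dim (T :&: g1) + \dim p1 <= \dim g1 + \dim S1)%N.
  apply: dim_orthogonal_stabilizer p1g1 (capvSr _ _) _ stab1.
  by move=> t u /memv_capP[tT _]; apply: orth.
have sum_cap := dimv_sum_cap T g1.
have le_sum : (\dim (T + g1) <= \dim (fullv : {vspace V}))%N by apply/dimvS/subvf.
have le_p1 := dimvS p1p'.
have p'T : (p' <= T)%VS by apply: addvSr.
have /eqP -> : p' == T.
  by rewrite -(dimv_leqif_eq p'T) eqn_leq dimvS //; lia.
exact: addvSl.
Qed.
End KirillovForm.

Theorem lemma3p6 (K : fieldType) (char0 : [pchar K] =i pred0)
    (V : vectType K) (br : V -> V -> V) (Hlie : is_lie_bracket br)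
    (g1 : {vspace V}) (Hg1 : lie_ideal br g1)
    (Hcodim : (\dim g1).+1 = \dim (fullv : {vspace V}))
    (f f' : {scalar V})
    (p1 : {vspace V})
    (Hp1 : polarization br g1 f p1) (Hp1' : polarization br g1 f' p1)
    (Hff' : forall x, x \in p1 -> f x = f' x)
    (p p' : {vspace V})
    (Hp : polarization br fullv f p) (Hp' : polarization br fullv f' p')
    (Hpg1 : (p :&: g1)%VS = p1) (Hp'g1 : (p' :&: g1)%VS = p1) :
  p = p'.
Proof.
have Hf'f x : x \in p1 -> f' x = f x by move/Hff'.
apply/eqP; rewrite eqEsubv.
by rewrite (polarization_sub Hlie Hg1 Hcodim Hp1' Hff' Hp Hp' Hpg1 Hp'g1)
           (polarization_sub Hlie Hg1 Hcodim Hp1 Hf'f Hp' Hp Hp'g1 Hpg1).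
Qed.
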